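(* Let $N\ge 1$ and let $D_1^N,\ldots,D_N^N:\mathbb{R}_+^N\to\mathbb{R}$ be demand functions satisfying assumptions (A1) and (A2) below. Fix a price vector $p=(p_1,\ldots,p_N)\in\mathbb{R}_+^N$ with $p_1\le p_2\le\cdots\le p_N$. Then $$D_1^N(p_1,\ldots,p_N)\ \ge\ D_2^N(p_1,\ldots,p_N)\ \ge\ \cdots\ \ge\ D_N^N(p_1,\ldots,p_N).$$
   Context: (A1) Each $D_i^N$ is smooth in all variables, $D_N^N(0,\ldots,0)>0$, $\partial D_i^N/\partial p_i<0$, and $\partial D_i^N/\partial p_j>0$ for $j\neq i$. (A2) Exchangeability: for all $i,j\in\{1,\ldots,N\}$ and all $p$, $D_i^N(p_1,\ldots,p_i,\ldots,p_j,\ldots,p_N)=D_j^N(p_1,\ldots,p_j,\ldots,p_i,\ldots,p_N)$ (the right-hand side has the $i$-th and $j$-th prices swapped); consequently $D_i^N$ is invariant under permutations of the prices $p_k$, $k\ne i$. *)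

From HB Require Import structures.
From mathcomp Require Import all_boot all_order all_algebra all_fingroup.
From mathcomp Require Import all_classical all_reals all_analysis.
Set Implicit Arguments. Unset Strict Implicit. Unset Printing Implicit Defensive.
Import Order.TTheory GRing.Theory Num.Theory.
Import numFieldNormedType.Exports.
Local Open Scope ring_scope.
Local Open Scope classical_set_scope.

Section Defs.
Variables (R : realType) (N : nat).
Local Notation V := 'rV[R]_N.

Fixpoint iter_dir (vs : seq V) (f : V -> R) : V -> R :=
  match vs with
  | [::] => f
  | v :: vs' => fun x => 'D_v (iter_dir vs' f) x
  end.

Definition orthant : set V := [set p | forall k : 'I_N, 0 <= p 0 k].

Definition smooth_on (A : set V) (f : V -> R) : Prop :=
  exists U : set V, [/\ open U, A `<=` U &
    forall (vs : seq V) (v : V) (x : V), U x -> derivable (iter_dir vs f) x v].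

Definition ev (k : 'I_N) : V := delta_mx 0 k.

Definition partial (k : 'I_N) (f : V -> R) (p : V) : R := 'D_(ev k) f p.

Definition swap_prices (i j : 'I_N) (p : V) : V := \row_k p 0 (tperm i j k).

End Defs.
Arguments orthant {R N}.

(* By exchangeability, D_j(p) = D_i(q) where q is p with p_i and p_j swapped.
   Raising the j-th price of q by c = p_j - p_i reaches the same point as
   raising the i-th price of p by c.  Along the first move D_i can only grow
   (positive cross effect), along the second it can only shrink (negative own
   effect), and both moves stay in the orthant; hence D_i(q) <= D_i(p). *)

From HB Require Import structures.
From mathcomp Require Import all_boot all_order all_algebra all_fingroup.
From mathcomp Require Import all_classical all_reals all_analysis.
Set Implicit Arguments. Unset Strict Implicit. Unset Printing Implicit Defensive.
Import Order.TTheory GRing.Theory Num.Theory.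
Import numFieldNormedType.Exports.
Local Open Scope ring_scope.
Local Open Scope classical_set_scope.

Section DirectionalMonotonicity.
Variables (R : realType) (V : normedModType R).
Implicit Types (f : V -> R) (x v : V).

Let difference_quotient_line f x v t :
  (fun h : R => h^-1 *: (((fun s : R => f (s *: v + x)) \o shift t) (h *: 1)
                         - f (t *: v + x)))
  = (fun h : R => h^-1 *: ((f \o shift (t *: v + x)) (h *: v) - f (t *: v + x))).
Proof.
apply: funext => h /=; congr (_ *: (f _ - _)).
rewrite /shift /= scalerDl addrA; congr (_ *: _ + _ + _); exact: mulr1.
Qed.

Lemma derivable_line f x v t :
  derivable f (t *: v + x) v -> derivable (fun s : R => f (s *: v + x)) t 1.
Proof. by rewrite /derivable difference_quotient_line. Qed.

Lemma derive1_line f x v t :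
  (fun s : R => f (s *: v + x))^`() t = 'D_v f (t *: v + x).
Proof. by rewrite derive1E /derive difference_quotient_line. Qed.

Lemma directional_ndecr f x v c : 0 <= c ->
  (forall t, 0 <= t <= c -> derivable f (t *: v + x) v) ->
  (forall t, 0 < t < c -> 0 <= 'D_v f (t *: v + x)) ->
  f x <= f (c *: v + x).
Proof.
move=> c_ge0 fdv fD_ge0.
have := @ger0_derive1_ndecr R (fun s : R => f (s *: v + x)) 0 c.
move=> /(_ _ _ _ 0 c (lexx _) c_ge0 (lexx _)); rewrite scale0r add0r; apply.
- move=> t; rewrite in_itv /= => /andP[t_gt0 t_ltc].
  by apply/derivable_line/fdv; rewrite !ltW.
- move=> t; rewrite in_itv /= => /andP[t_gt0 t_ltc].
  by rewrite derive1_line fD_ge0 ?t_gt0.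
- apply: derivable_within_continuous => t; rewrite in_itv /= => /andP[? ?].
  by apply/derivable_line/fdv/andP.
Qed.

Lemma directional_nincr f x v c : 0 <= c ->
  (forall t, 0 <= t <= c -> derivable f (t *: v + x) v) ->
  (forall t, 0 < t < c -> 'D_v f (t *: v + x) <= 0) ->
  f (c *: v + x) <= f x.
Proof.
move=> c_ge0 fdv fD_le0; rewrite -lerN2.
apply: (@directional_ndecr (- f)) => // t /andP[t_ge0 t_lec].
  exact/derivableN/fdv/andP.
have fdvt : derivable f (t *: v + x) v by apply: fdv; rewrite !ltW.
by rewrite deriveN // oppr_ge0 fD_le0 ?t_ge0.
Qed.

End DirectionalMonotonicity.

Section Orthant.
Variables (R : realType) (N : nat).
Implicit Types (p : 'rV[R]_N) (i j : 'I_N).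

Lemma orthant_ev_shift p i t :
  orthant p -> 0 <= t -> orthant (t *: ev R i + p).
Proof.
move=> p_ge0 t_ge0 k; rewrite /ev !mxE eqxx /= eq_sym.
by rewrite addr_ge0 ?mulr_ge0 ?ler0n.
Qed.

Lemma orthant_swap_prices p i j : orthant p -> orthant (swap_prices i j p).
Proof. by move=> p_ge0 k; rewrite mxE. Qed.

Lemma ev_shift_swap_prices p i j : j != i ->
  (p 0 j - p 0 i) *: ev R j + swap_prices j i p
  = (p 0 j - p 0 i) *: ev R i + p.
Proof.
move=> ji; apply/rowP => k; rewrite /ev /swap_prices !mxE eqxx /=.
have [->|ki] := eqVneq k i.
  by rewrite tpermR eq_sym (negbTE ji) mulr0 mulr1 add0r subrK.
have [->|kj] := eqVneq k j; first by rewrite tpermL mulr0 mulr1 add0r subrK.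
by rewrite tpermD 1?eq_sym // (negbTE kj) !mulr0.
Qed.

Lemma smooth_on_derivable (A : set 'rV[R]_N) (f : 'rV[R]_N -> R) p v :
  smooth_on A f -> A p -> derivable f p v.
Proof. by move=> [U [_ AU fdU]] /AU; apply: (fdU [::]). Qed.

End Orthant.

Lemma demand_swap_prices_le (R : realType) (N : nat) (i j : 'I_N)
    (Di : 'rV[R]_N -> R) (p : 'rV[R]_N) :
  smooth_on orthant Di ->
  (forall q, orthant q -> partial i Di q < 0) ->
  (forall q, orthant q -> 0 < partial j Di q) ->
  j != i -> orthant p -> p 0 i <= p 0 j ->
  Di (swap_prices j i p) <= Di p.
Proof.
move=> Di_smooth own cross ji p_ge0 pij.
have c_ge0 : 0 <= p 0 j - p 0 i by rewrite subr_ge0.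
have q_ge0 := orthant_swap_prices j i p_ge0.
have Di_der q k t : orthant q -> 0 <= t -> derivable Di (t *: ev R k + q) (ev R k).
  by move=> q0 t0; apply: (smooth_on_derivable Di_smooth); exact: orthant_ev_shift.
apply: (@le_trans _ _ (Di ((p 0 j - p 0 i) *: ev R j + swap_prices j i p))).
  apply: directional_ndecr => // t /andP[t_ge0 _]; first exact: Di_der.
  by apply/ltW/cross/orthant_ev_shift => //; exact: ltW.
rewrite ev_shift_swap_prices //.
apply: directional_nincr => // t /andP[t_ge0 _]; first exact: Di_der.
by apply/ltW/own/orthant_ev_shift => //; exact: ltW.
Qed.

Theorem proposition2p1 (R : realType) (n : nat)
  (D : 'I_n.+1 -> 'rV[R]_n.+1 -> R)
  (* (A1) *)
  (Hsmooth : forall i, smooth_on (orthant) (D i))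
  (Hpos : 0 < D ord_max (0 : 'rV[R]_n.+1))
  (Hown : forall i p, orthant p -> partial i (D i) p < 0)
  (Hcross : forall i j p, orthant p -> j != i -> 0 < partial j (D i) p)
  (* (A2) *)
  (Hexch : forall i j p, orthant p -> D i p = D j (swap_prices i j p))
  (p : 'rV[R]_n.+1) (Hp : orthant p)
  (Hsorted : forall i j : 'I_n.+1, (val j = (val i).+1)%N -> p 0 i <= p 0 j) :
  forall i j : 'I_n.+1, (val j = (val i).+1)%N -> D j p <= D i p.
Proof.
move=> i j ji_succ.
have ji : j != i by apply/eqP => ji; move: ji_succ; rewrite ji => /n_Sn.
rewrite (Hexch j i p Hp).
apply: (demand_swap_prices_le (Hsmooth i)) => // [q|q q_ge0|].
- exact: Hown.
- exact: Hcross.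
- exact: Hsorted.
Qed.
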